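(* Suppose that $\|\mathcal{P}_{T_i}\mathcal{A}_{i,p}^*\mathcal{A}_{i,p}\boldsymbol{S}_{i,p}\mathcal{P}_{T_i}-\mathcal{P}_{T_i}\|\le\frac14$ for all $1\le i\le r$, $1\le p\le P$, and $\|\mathcal{P}_{T_j}\mathcal{A}_{j,p}^*\mathcal{A}_{k,p}\boldsymbol{S}_{k,p}\mathcal{P}_{T_k}\|\le\frac1{4r}$ for all $1\le j\ne k\le r$, $1\le p\le P$. Then the golfing scheme defined in the context generates a sequence $\{\boldsymbol{Y}_{i,p}\}_{p=1}^P$ such that $$\|\boldsymbol{W}_{i,p}\|_F=\|\mathcal{P}_{T_i}(\boldsymbol{Y}_{i,p})-\boldsymbol{h}_i\boldsymbol{x}_i^*\|_F\le2^{-p}$$ holds simultaneously for all $1\le i\le r$ (and $1\le p\le P$). In particular, if $P\ge\log_2(5r\gamma)$, then $\|\mathcal{P}_{T_i}(\boldsymbol{Y}_i)-\boldsymbol{h}_i\boldsymbol{x}_i^*\|_F\le\frac1{5r\gamma}$, where $\boldsymbol{Y}_i:=\boldsymbol{Y}_{i,P}$.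
   Context: $\boldsymbol{h}_i\in\mathbb{R}^{K_i}$, $\boldsymbol{x}_i\in\mathbb{R}^{N_i}$ real unit-norm (standing assumption); $\boldsymbol{b}_{i,l}\in\mathbb{C}^{K_i}$, $\boldsymbol{a}_{i,l}\in\mathbb{R}^{N_i}$ given vectors. Partition $\{\Gamma_p\}_{p=1}^P$ of $\{1,\dots,L\}$ with $|\Gamma_p|=Q$; $\boldsymbol{T}_{i,p}=\sum_{l\in\Gamma_p}\boldsymbol{b}_{i,l}\boldsymbol{b}_{i,l}^*$ invertible, $\boldsymbol{S}_{i,p}=\boldsymbol{T}_{i,p}^{-1}$ (acting as $\boldsymbol{Z}\mapsto\boldsymbol{S}_{i,p}\boldsymbol{Z}$). $\mathcal{A}_{i,p}(\boldsymbol{Z})=\{\boldsymbol{b}_{i,l}^*\boldsymbol{Z}\boldsymbol{a}_{i,l}\}_{l\in\Gamma_p}$, $\mathcal{A}_{i,p}^*(\boldsymbol{z})=\sum_{l\in\Gamma_p}z_l\boldsymbol{b}_{i,l}\boldsymbol{a}_{i,l}^*$; $\mathcal{P}_{T_i}(\boldsymbol{Z})=\boldsymbol{h}_i\boldsymbol{h}_i^*\boldsymbol{Z}+(\boldsymbol{I}-\boldsymbol{h}_i\boldsymbol{h}_i^* )\boldsymbol{Z}\boldsymbol{x}_i\boldsymbol{x}_i^*$. Operator norms w.r.t. Frobenius norms. $\gamma>0$ is an upper bound on the operator norms $\|\mathcal{A}_i\|$ of $\mathcal{A}_i(\boldsymbol{Z})=\{\boldsymbol{b}_{i,l}^*\boldsymbol{Z}\boldsymbol{a}_{i,l}\}_{l=1}^L$.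 Golfing scheme: $\boldsymbol{Y}_{i,0}=\boldsymbol{0}$; for $p=1,\dots,P$: $\boldsymbol{\lambda}_{p-1}:=\sum_{j=1}^r\mathcal{A}_{j,p}\big(\boldsymbol{S}_{j,p}(\boldsymbol{h}_j\boldsymbol{x}_j^*-\mathcal{P}_{T_j}(\boldsymbol{Y}_{j,p-1}))\big)$ and $\boldsymbol{Y}_{i,p}:=\boldsymbol{Y}_{i,p-1}+\mathcal{A}_{i,p}^*(\boldsymbol{\lambda}_{p-1})$; $\boldsymbol{W}_{i,p}:=\boldsymbol{h}_i\boldsymbol{x}_i^*-\mathcal{P}_{T_i}(\boldsymbol{Y}_{i,p})$. *)

From HB Require Import structures.
From mathcomp Require Import all_boot all_order all_algebra.
From mathcomp Require Import all_classical all_reals all_analysis.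
From mathcomp Require Import complex.
Set Implicit Arguments. Unset Strict Implicit. Unset Printing Implicit Defensive.
Import Order.TTheory GRing.Theory Num.Theory.
Local Open Scope ring_scope.

Section Golfing.
Variable R : realType.
Local Notation C := (R[i]).

Definition fnorm m n (Z : 'M[C]_(m, n)) : R :=
  Num.sqrt (\sum_(k < m) \sum_(l < n) (Normc.normc (Z k l)) ^+ 2).

(* ||f|| <= c for the operator norm induced by the Frobenius norms
   (unfolding of the definition of the operator norm). *)
Definition opnorm_le m n m' n' (f : 'M[C]_(m, n) -> 'M[C]_(m', n')) (c : R) : Prop :=
  forall Z, fnorm (f Z) <= c * fnorm Z.

Definition cplx m n (v : 'M[R]_(m, n)) : 'M[C]_(m, n) :=
  map_mx (fun t => (t%:C)%C) v.

Definition adj m n (M : 'M[C]_(m, n)) : 'M[C]_(n, m) :=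
  (map_mx (fun z => (z^*)%C) M)^T.

Definition unit_vec n (v : 'cV[R]_n) : Prop := \sum_(k < n) v k 0 ^+ 2 = 1.

Definition PT K N (h : 'cV[R]_K) (x : 'cV[R]_N) (Z : 'M[C]_(K, N)) : 'M[C]_(K, N) :=
  cplx (h *m h^T) *m Z + (1%:M - cplx (h *m h^T)) *m Z *m cplx (x *m x^T).

Definition meas K N (b : 'cV[C]_K) (a : 'cV[R]_N) (Z : 'M[C]_(K, N)) : C :=
  (adj b *m Z *m cplx a) 0 0.

(* A_{i,p}(Z), as a vector of C^L supported on Gamma (C^Gamma extended by 0) *)
Definition Aop L K N (G : {set 'I_L}) (b : 'I_L -> 'cV[C]_K) (a : 'I_L -> 'cV[R]_N)
  (Z : 'M[C]_(K, N)) : 'rV[C]_L :=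
  \row_l (if l \in G then meas (b l) (a l) Z else 0).

Definition Afull L K N (b : 'I_L -> 'cV[C]_K) (a : 'I_L -> 'cV[R]_N)
  (Z : 'M[C]_(K, N)) : 'rV[C]_L :=
  \row_l meas (b l) (a l) Z.

Definition Aadj L K N (G : {set 'I_L}) (b : 'I_L -> 'cV[C]_K) (a : 'I_L -> 'cV[R]_N)
  (z : 'rV[C]_L) : 'M[C]_(K, N) :=
  \sum_(l in G) z 0 l *: (b l *m adj (cplx (a l))).

Definition Tmat L K (G : {set 'I_L}) (b : 'I_L -> 'cV[C]_K) : 'M[C]_K :=
  \sum_(l in G) b l *m adj (b l).

Definition Smat L K (G : {set 'I_L}) (b : 'I_L -> 'cV[C]_K) : 'M[C]_K :=
  invmx (Tmat G b).

(* The golfing scheme: Y p i = Y_{i,p}, with Gamma indexed by p = 1..P. *)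
Fixpoint golfY r L (K N : 'I_r -> nat) (h : forall i, 'cV[R]_(K i))
  (x : forall i, 'cV[R]_(N i)) (b : forall i, 'I_L -> 'cV[C]_(K i))
  (a : forall i, 'I_L -> 'cV[R]_(N i)) (Gam : nat -> {set 'I_L}) (p : nat)
  : forall i : 'I_r, 'M[C]_(K i, N i) :=
  match p with
  | 0 => fun i => 0
  | q.+1 =>
    let Yq := golfY h x b a Gam q in
    let lam : 'rV[C]_L :=
      \sum_(j < r) Aop (Gam q.+1) (b j) (a j)
         (Smat (Gam q.+1) (b j) *m (cplx (h j *m (x j)^T) - PT (h j) (x j) (Yq j))) in
    fun i => Yq i + Aadj (Gam q.+1) (b i) (a i) lam
  end.

Definition golfW r L (K N : 'I_r -> nat) (h : forall i, 'cV[R]_(K i))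
  (x : forall i, 'cV[R]_(N i)) (b : forall i, 'I_L -> 'cV[C]_(K i))
  (a : forall i, 'I_L -> 'cV[R]_(N i)) (Gam : nat -> {set 'I_L}) (p : nat)
  (i : 'I_r) : 'M[C]_(K i, N i) :=
  cplx (h i *m (x i)^T) - PT (h i) (x i) (golfY h x b a Gam p i).

End Golfing.

(** Since [P_T] is idempotent and fixes [h x^*], every residual [W_{i,p}]
    lies in [T_i], and one step of the scheme reads
    [W_{i,p} = W_{i,p-1} - \sum_j P_{T_i} A_{i,p}^* A_{j,p} S_{j,p} P_{T_j} W_{j,p-1}].
    The diagonal term moves [W_{i,p-1}] by at most a quarter of its norm and
    each of the [r] cross terms contributes at most [1/(4r)] of the current
    bound, so the bound halves at each step, starting from
    [||W_{i,0}|| = ||h_i x_i^*|| = 1]; for [p = P] the log condition gives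
    [2^{-P} <= 1/(5 r gamma)]. *)

From HB Require Import structures.
From mathcomp Require Import all_boot all_order all_algebra.
From mathcomp Require Import all_classical all_reals all_analysis.
From mathcomp Require Import complex.
From mathcomp Require Import ring lra.
Set Implicit Arguments. Unset Strict Implicit. Unset Printing Implicit Defensive.
Import Order.TTheory GRing.Theory Num.Theory.
Local Open Scope ring_scope.

Section SqrtSumSquares.
Variable R : rcfType.

Lemma sqr_sqrt_sumsq (I : finType) (u : I -> R) :
  Num.sqrt (\sum_i u i ^+ 2) ^+ 2 = \sum_i u i ^+ 2.
Proof. by rewrite sqr_sqrtr // sumr_ge0 // => i _; exact: sqr_ge0. Qed.

Lemma sqrt_sumsq_eq0 (I : finType) (u : I -> R) :
  Num.sqrt (\sum_i u i ^+ 2) = 0 -> forall i, u i = 0.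
Proof.
move=> u0 i; apply/eqP; rewrite -sqrf_eq0; apply/eqP.
apply: (psumr_eq0P (P := xpredT) (fun i _ => sqr_ge0 (u i))) => //.
by rewrite -sqr_sqrt_sumsq u0 expr0n.
Qed.

Lemma cauchy_schwarz_sum (I : finType) (u v : I -> R) :
  \sum_i u i * v i <= Num.sqrt (\sum_i u i ^+ 2) * Num.sqrt (\sum_i v i ^+ 2).
Proof.
set a := Num.sqrt _; set c := Num.sqrt _.
have [a0|a_neq0] := eqVneq a 0.
  by rewrite big1 ?a0 ?mul0r // => i _; rewrite (sqrt_sumsq_eq0 a0) mul0r.
have [c0|c_neq0] := eqVneq c 0.
  by rewrite big1 ?c0 ?mulr0 // => i _; rewrite (sqrt_sumsq_eq0 c0) mulr0.
have acp : 0 < 2 * a * c by rewrite !mulr_gt0 // lt_def ?a_neq0 ?c_neq0 sqrtr_ge0.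
have amgm : \sum_i (2 * a * c) * (u i * v i)
            <= \sum_i (u i ^+ 2 * c ^+ 2 + v i ^+ 2 * a ^+ 2).
  by apply: ler_sum => i _; have := sqr_ge0 (u i * c - v i * a); nra.
rewrite -mulr_sumr big_split /= -!mulr_suml in amgm.
rewrite -[\sum_i u i ^+ 2]sqr_sqrt_sumsq -[\sum_i v i ^+ 2]sqr_sqrt_sumsq -/a -/c in amgm.
rewrite -(ler_pM2l acp); apply: (le_trans amgm).
by rewrite le_eqVlt; apply/orP; left; apply/eqP; ring.
Qed.

Lemma minkowski_sum (I : finType) (w u v : I -> R) :
  (forall i, 0 <= w i) -> (forall i, w i <= u i + v i) ->
  Num.sqrt (\sum_i w i ^+ 2) <= Num.sqrt (\sum_i u i ^+ 2) + Num.sqrt (\sum_i v i ^+ 2).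
Proof.
move=> w_ge0 w_le.
set a := Num.sqrt (\sum_i u i ^+ 2); set c := Num.sqrt (\sum_i v i ^+ 2).
have ac_ge0 : 0 <= a + c by rewrite addr_ge0 ?sqrtr_ge0.
rewrite -(ger0_norm ac_ge0) -sqrtr_sqr ler_sqrt ?sqr_ge0 //.
apply: (le_trans (y := \sum_i (u i ^+ 2 + 2 * (u i * v i) + v i ^+ 2))).
  apply: ler_sum => i _.
  have -> : u i ^+ 2 + 2 * (u i * v i) + v i ^+ 2 = (u i + v i) ^+ 2 by ring.
  by rewrite ler_sqr ?nnegrE ?w_ge0 ?w_le //; exact: le_trans (w_ge0 i) (w_le i).
rewrite !big_split /= -mulr_sumr -[\sum_i u i ^+ 2]sqr_sqrt_sumsq.
rewrite -[\sum_i v i ^+ 2]sqr_sqrt_sumsq -/a -/c.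
have := cauchy_schwarz_sum u v; rewrite -/a -/c => cs.
have -> : (a + c) ^+ 2 = a ^+ 2 + 2 * (a * c) + c ^+ 2 by ring.
by rewrite lerD2r lerD2l ler_pM2l.
Qed.

End SqrtSumSquares.

Section FrobeniusNorm.
Variable R : realType.
Local Notation C := (R[i]).

Lemma normc_ge0 (z : C) : 0 <= Normc.normc z.
Proof. by case: z => a b; exact: sqrtr_ge0. Qed.

Lemma fnorm_ge0 m n (A : 'M[C]_(m, n)) : 0 <= fnorm A.
Proof. exact: sqrtr_ge0. Qed.

Lemma fnorm0 m n : fnorm (0 : 'M[C]_(m, n)) = 0.
Proof.
rewrite /fnorm big1 ?sqrtr0 // => k _; rewrite big1 // => l _.
by rewrite mxE Normc.normc0 expr0n.
Qed.

Lemma fnormN m n (A : 'M[C]_(m, n)) : fnorm (- A) = fnorm A.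
Proof.
rewrite /fnorm; congr Num.sqrt; apply: eq_bigr => k _; apply: eq_bigr => l _.
by rewrite mxE normcN.
Qed.

Lemma fnormD m n (A B : 'M[C]_(m, n)) : fnorm (A + B) <= fnorm A + fnorm B.
Proof.
rewrite /fnorm !(pair_bigA _ (fun k l => Normc.normc (_ k l) ^+ 2)) /=.
apply: (minkowski_sum (w := fun p : 'I_m * 'I_n => Normc.normc ((A + B) p.1 p.2)))
  => [p|p]; first exact: normc_ge0.
by rewrite mxE; exact: le_normcD.
Qed.

Lemma fnorm_sum m n (I : finType) (P : pred I) (F : I -> 'M[C]_(m, n)) :
  fnorm (\sum_(j | P j) F j) <= \sum_(j | P j) fnorm (F j).
Proof.
elim/big_rec2: _ => [|j y Z _ hZ]; first by rewrite fnorm0.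
by apply: (le_trans (fnormD _ _)); rewrite lerD2l.
Qed.

End FrobeniusNorm.

Section TangentProjection.
Variable R : realType.
Local Notation C := (R[i]).
Variables (K N : nat) (h : 'cV[R]_K) (x : 'cV[R]_N).
Hypotheses (h_unit : unit_vec h) (x_unit : unit_vec x).

Lemma unit_vec_tr_mul n (v : 'cV[R]_n) : unit_vec v -> v^T *m v = 1%:M.
Proof.
move=> v_unit; apply/matrixP => i j; rewrite !ord1 !mxE /= -v_unit.
by apply: eq_bigr => k _; rewrite mxE expr2.
Qed.

Lemma PTD (A B : 'M[C]_(K, N)) : PT h x (A + B) = PT h x A + PT h x B.
Proof. by rewrite /PT !mulmxDr !mulmxDl addrACA. Qed.

Lemma PT0 : PT h x 0 = 0.
Proof. by rewrite /PT !mulmx0 mul0mx addr0. Qed.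

Lemma PTB (A B : 'M[C]_(K, N)) : PT h x (A - B) = PT h x A - PT h x B.
Proof. by rewrite PTD /PT !mulmxN mulNmx opprD. Qed.

Lemma PT_sum (I : finType) (P : pred I) (F : I -> 'M[C]_(K, N)) :
  PT h x (\sum_(j | P j) F j) = \sum_(j | P j) PT h x (F j).
Proof. exact: (big_morph _ PTD PT0). Qed.

Lemma proj_idem n (v : 'cV[R]_n) : unit_vec v ->
  cplx (v *m v^T) *m cplx (v *m v^T) = cplx (v *m v^T).
Proof.
by move=> v_unit; rewrite -map_mxM mulmxA -(mulmxA v) unit_vec_tr_mul // mulmx1.
Qed.

Lemma PT_idem (Z : 'M[C]_(K, N)) : PT h x (PT h x Z) = PT h x Z.
Proof.
rewrite /PT; set H := cplx (h *m h^T); set X := cplx (x *m x^T).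
have HH : H *m H = H by exact: proj_idem.
have XX : X *m X = X by exact: proj_idem.
have HD : H *m (1%:M - H) = 0 by rewrite mulmxBr mulmx1 HH subrr.
have DH : (1%:M - H) *m H = 0 by rewrite mulmxBl mul1mx HH subrr.
have DD : (1%:M - H) *m (1%:M - H) = 1%:M - H by rewrite mulmxBr mulmx1 DH subr0.
move: HD DH DD; set D := 1%:M - H; clearbody D => HD DH DD.
rewrite !mulmxDr !mulmxDl !mulmxA HH HD DH DD !mul0mx addr0 add0r.
by rewrite -(mulmxA _ X X) XX.
Qed.

Lemma PT_hx : PT h x (cplx (h *m x^T)) = cplx (h *m x^T).
Proof.
rewrite /PT -!map_mxM.
have hhT : h *m h^T *m (h *m x^T) = h *m x^T
  by rewrite mulmxA -(mulmxA h) unit_vec_tr_mul // mulmx1.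
have xxT : h *m x^T *m (x *m x^T) = h *m x^T
  by rewrite -mulmxA (mulmxA x^T) unit_vec_tr_mul // mul1mx.
by rewrite hhT -mulmxA -map_mxM xxT mulmxBl mul1mx -map_mxM hhT subrr addr0.
Qed.

Lemma PT_residual (Y : 'M[C]_(K, N)) :
  PT h x (cplx (h *m x^T) - PT h x Y) = cplx (h *m x^T) - PT h x Y.
Proof. by rewrite PTB PT_hx PT_idem. Qed.

Lemma fnorm_hx : fnorm (cplx (h *m x^T)) = 1.
Proof.
rewrite /fnorm -sqrtr1; congr Num.sqrt.
transitivity (\sum_(k < K) \sum_(l < N) (h k 0 ^+ 2 * x l 0 ^+ 2)).
  apply: eq_bigr => k _; apply: eq_bigr => l _.
  rewrite !mxE big_ord1 mxE /= /Normc.normc /= expr0n addr0 sqr_sqrtr ?sqr_ge0 //.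
  by rewrite exprMn.
by rewrite -h_unit; apply: eq_bigr => k _; rewrite -mulr_sumr x_unit mulr1.
Qed.

End TangentProjection.

Lemma Aadj_sum (R : realType) L K N (G : {set 'I_L}) (b : 'I_L -> 'cV[R[i]]_K)
  (a : 'I_L -> 'cV[R]_N) (I : finType) (v : I -> 'rV[R[i]]_L) :
  Aadj G b a (\sum_j v j) = \sum_j Aadj G b a (v j).
Proof.
rewrite /Aadj; under eq_bigr do rewrite summxE scaler_suml.
exact: exchange_big.
Qed.

Section GolfingResidual.
Variable R : realType.
Variables (r L P : nat) (K N : 'I_r -> nat).
Variables (h : forall i, 'cV[R]_(K i)) (x : forall i, 'cV[R]_(N i)).
Variables (b : forall i, 'I_L -> 'cV[R[i]]_(K i)) (a : forall i, 'I_L -> 'cV[R]_(N i)).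
Variable Gam : nat -> {set 'I_L}.
Hypotheses (h_unit : forall i, unit_vec (h i)) (x_unit : forall i, unit_vec (x i)).

Local Notation W := (golfW h x b a Gam).
Local Notation cross p i j Z := (PT (h i) (x i) (Aadj (Gam p) (b i) (a i)
  (Aop (Gam p) (b j) (a j) (Smat (Gam p) (b j) *m Z)))).

Hypothesis diag_near_PT : forall i p, (1 <= p <= P)%N ->
  opnorm_le (fun Z => cross p i i (PT (h i) (x i) Z) - PT (h i) (x i) Z) (1 / 4).
Hypothesis cross_small : forall j k p, j != k -> (1 <= p <= P)%N ->
  opnorm_le (fun Z => cross p j k (PT (h k) (x k) Z)) (1 / (4 * r%:R)).

Lemma PT_golfW p i : PT (h i) (x i) (W p i) = W p i.
Proof. exact: PT_residual. Qed.

Lemma fnorm_golfW0 i : fnorm (W 0 i) = 1.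
Proof. by rewrite /golfW /= PT0 subr0 fnorm_hx. Qed.

Lemma golfWS p i : W p.+1 i = W p i - \sum_j cross p.+1 i j (W p j).
Proof. by rewrite /golfW /= PTD opprD addrA Aadj_sum PT_sum. Qed.

Lemma fnorm_golfWS_le p i t : (p < P)%N ->
  (forall j, fnorm (W p j) <= t) -> fnorm (W p.+1 i) <= t / 2.
Proof.
move=> ltpP W_le; have Hp : (1 <= p.+1 <= P)%N by rewrite ltpP.
have r_gt0 : 0 < r%:R :> R by rewrite ltr0n (leq_ltn_trans (leq0n i) (ltn_ord i)).
have t_ge0 : 0 <= t by exact: le_trans (fnorm_ge0 _) (W_le i).
have c_ge0 : 0 <= 1 / (4 * r%:R) * t :> R by rewrite mulr_ge0 ?divr_ge0 ?mulr_ge0.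
rewrite golfWS (bigD1 i) //=.
set D := cross _ i i _; set S := \sum_(j | j != i) _.
have -> : W p i - (D + S) = - ((D - W p i) + S).
  by rewrite [RHS]opprD opprB opprD addrA.
rewrite fnormN; apply: (le_trans (fnormD _ _)).
have diag_le : fnorm (D - W p i) <= 1 / 4 * t.
  have := @diag_near_PT i p.+1 Hp (W p i); rewrite /= !PT_golfW => /le_trans; apply.
  by rewrite ler_wpM2l.
have off_le : fnorm S <= \sum_(j | j != i) 1 / (4 * r%:R) * t.
  apply: (le_trans (fnorm_sum _ _)); apply: ler_sum => j ji.
  have ij : i != j by rewrite eq_sym.
  have := @cross_small i j p.+1 ij Hp (W p j).
  rewrite /= !PT_golfW => /le_trans; apply; rewrite ler_wpM2l ?W_le //.
have sum_le : \sum_(j | j != i) 1 / (4 * r%:R) * t <= 1 / 4 * t.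
  apply: (le_trans (y := \sum_(j < r) 1 / (4 * r%:R) * t)).
    by rewrite [leRHS](bigD1 i) //= lerDr.
  rewrite sumr_const card_ord -mulr_natl le_eqVlt; apply/orP; left.
  by apply/eqP; field; rewrite gt_eqF.
lra.
Qed.

Lemma fnorm_golfW_le p i : (p <= P)%N -> fnorm (W p i) <= 2%:R ^- p.
Proof.
elim: p i => [|p IHp] i lepP; first by rewrite fnorm_golfW0 expr0 invr1.
rewrite exprS invfM mulrC.
exact: fnorm_golfWS_le lepP (fun j => IHp j (ltnW lepP)).
Qed.

End GolfingResidual.

Lemma inv_pow2_le_of_log2_le (R : realType) (c : R) (P : nat) :
  0 < c -> ln c / ln 2 <= P%:R -> 2%:R ^- P <= 1 / c.
Proof.
move=> c_gt0; have ln2_gt0 : 0 < ln (2 : R) by apply: ln_gt0; lra.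
rewrite ler_pdivrMr // mulr_natl -lnXn // ler_ln ?posrE ?exprn_gt0 // => c_le.
by rewrite mul1r lef_pV2 ?posrE ?exprn_gt0.
Qed.

Theorem lemma5 (R : realType) (r L P Q : nat) (K N : 'I_r -> nat)
  (h : forall i, 'cV[R]_(K i)) (x : forall i, 'cV[R]_(N i))
  (b : forall i, 'I_L -> 'cV[R[i]]_(K i)) (a : forall i, 'I_L -> 'cV[R]_(N i))
  (Gam : nat -> {set 'I_L}) (gamma : R) :
  (forall i, unit_vec (h i)) ->
  (forall i, unit_vec (x i)) ->
  (* {Gamma_p}_{p=1}^P is a partition of {1..L} with |Gamma_p| = Q *)
  (forall p, (1 <= p <= P)%N -> #|Gam p| = Q) ->
  (forall l, exists p, (1 <= p <= P)%N /\ l \in Gam p) ->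
  (forall p q, (1 <= p <= P)%N -> (1 <= q <= P)%N -> p <> q -> [disjoint Gam p & Gam q]) ->
  (* T_{i,p} invertible *)
  (forall i p, (1 <= p <= P)%N -> Tmat (Gam p) (b i) \in unitmx) ->
  (* gamma > 0 bounds ||A_i|| *)
  0 < gamma ->
  (forall i, opnorm_le (Afull (b i) (a i)) gamma) ->
  (* hypotheses of the lemma *)
  (forall i p, (1 <= p <= P)%N ->
     opnorm_le (fun Z => PT (h i) (x i) (Aadj (Gam p) (b i) (a i)
                  (Aop (Gam p) (b i) (a i) (Smat (Gam p) (b i) *m PT (h i) (x i) Z)))
                 - PT (h i) (x i) Z) (1 / 4)) ->
  (forall j k p, j != k -> (1 <= p <= P)%N ->
     opnorm_le (fun Z => PT (h j) (x j) (Aadj (Gam p) (b j) (a j)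
                  (Aop (Gam p) (b k) (a k) (Smat (Gam p) (b k) *m PT (h k) (x k) Z))))
               (1 / (4 * r%:R))) ->
  (forall i p, (1 <= p <= P)%N -> fnorm (golfW h x b a Gam p i) <= 2%:R ^- p)
  /\
  (ln (5 * r%:R * gamma) / ln 2 <= P%:R ->
     forall i, fnorm (PT (h i) (x i) (golfY h x b a Gam P i) - cplx (h i *m (x i)^T))
               <= 1 / (5 * r%:R * gamma)).
Proof.
move=> h_unit x_unit _ _ _ _ gamma_gt0 _ diag_near_PT cross_small.
have W_le := fnorm_golfW_le h_unit x_unit diag_near_PT cross_small.
split=> [i p /andP [_ lepP]|logP i]; first exact: W_le.
have c_gt0 : 0 < 5 * r%:R * gamma.
  by rewrite !mulr_gt0 // ltr0n (leq_ltn_trans (leq0n i) (ltn_ord i)).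
rewrite -opprB fnormN; apply: le_trans (W_le P i (leqnn P)) _.
exact: inv_pow2_le_of_log2_le c_gt0 logP.
Qed.
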